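(* For all $k\ge1$, as formal power series in $t$, $$\sum_{n\ge k}\mathbf{Sf}_{n,k}(p,q)\,t^n=\frac{t^k}{(1-F_1(p,q)t)(1-F_2(p,q)t)\cdots(1-F_k(p,q)t)}.$$
   Context: $F_1(p,q)=q$, $F_2(p,q)=q^2$ and $F_m(p,q)=qF_{m-1}(p,q)+pF_{m-2}(p,q)$ for $m\ge3$. Let $(x)_{\downarrow_{F,p,q,0}}=1$ and $(x)_{\downarrow_{F,p,q,k}}=x(x-F_1(p,q))\cdots(x-F_{k-1}(p,q))$ for $k\ge1$. Define $\mathbf{Sf}_{n,k}(p,q)$ for $0\le k\le n$ by $x^n=\sum_{k=0}^n\mathbf{Sf}_{n,k}(p,q)(x)_{\downarrow_{F,p,q,k}}$. *)

From HB Require Import structures.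
From mathcomp Require Import all_boot all_order all_algebra.
Set Implicit Arguments. Unset Strict Implicit. Unset Printing Implicit Defensive.
Import GRing.Theory.
Local Open Scope ring_scope.

Fixpoint Fpq (R : comNzRingType) (p q : R) (m : nat) : R :=
  match m with
  | 0 => 0
  | 1 => q
  | 2 => q ^+ 2
  | (m'.+1 as m1).+1 => q * Fpq p q m1 + p * Fpq p q m'
  end.

Definition ffall (R : comNzRingType) (p q : R) (k : nat) : {poly R} :=
  if k is 0 then 1 else 'X * \prod_(1 <= i < k) ('X - (Fpq p q i)%:P).

Definition fps (R : comNzRingType) := nat -> R.
Definition fps_mul (R : comNzRingType) (f g : fps R) : fps R :=
  fun n => \sum_(i < n.+1) f i * g (n - i)%N.
Definition fps_of_poly (R : comNzRingType) (P : {poly R}) : fps R := fun n => P`_n.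
Definition fps_tpow (R : comNzRingType) (k : nat) : fps R := fun n => (n == k)%:R.

(* Expanding x^(n+1) = x * x^n in the basis (x)_k and using
   x (x)_k = (x)_(k+1) + F_k (x)_k gives the triangular recurrence
   Sf(n+1,k) = Sf(n,k-1) + F_k Sf(n,k), i.e. (1 - F_k t) S_k(t) = t S_(k-1)(t)
   for the column generating series S_k; iterating from S_0 = 1 yields the
   product formula.  To stay with polynomials we work with the truncations of
   S_k below degree N, for which the recurrence holds up to a term in t^N. *)

From HB Require Import structures.
From mathcomp Require Import all_boot all_order all_algebra.
From mathcomp Require Import ring.
From Stdlib Require Import FunctionalExtensionality.
Set Implicit Arguments. Unset Strict Implicit. Unset Printing Implicit Defensive.
Import GRing.Theory.
Local Open Scope ring_scope.

Section TriangularBasis.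
Variables (R : comNzRingType) (b : nat -> {poly R}).
Hypothesis coef_b_diag : forall k, (b k)`_k = 1.
Hypothesis size_b : forall k, (size (b k) <= k.+1)%N.

Lemma triangular_comb_eq0 N (c : nat -> R) :
  \sum_(k < N) (c k)%:P * b k = 0 -> forall k, (k < N)%N -> c k = 0.
Proof.
elim: N => [|N IH] // comb0 k.
have cN : c N = 0.
  move/(congr1 (fun P : {poly R} => P`_N)): comb0.
  rewrite big_ord_recr /= coef0 coefD coef_sum coefCM coef_b_diag mulr1.
  rewrite big1 ?add0r // => i _.
  by rewrite coefCM nth_default ?mulr0 // (leq_trans (size_b i)).
rewrite ltnS leq_eqVlt => /orP [/eqP -> //|ltkN].
by apply: IH ltkN; move: comb0; rewrite big_ord_recr /= cN mul0r addr0.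
Qed.

Lemma triangular_comb_inj N (c d : nat -> R) :
  \sum_(k < N) (c k)%:P * b k = \sum_(k < N) (d k)%:P * b k ->
  forall k, (k < N)%N -> c k = d k.
Proof.
move=> eq_cd k ltkN; apply/eqP; rewrite -subr_eq0; apply/eqP.
apply: (@triangular_comb_eq0 N (fun k => c k - d k)) ltkN.
under eq_bigr do rewrite polyCB mulrBl.
by rewrite sumrB eq_cd subrr.
Qed.

End TriangularBasis.

Section FallingFactorial.
Variables (R : comNzRingType) (p q : R).

Lemma monic_ffall k : ffall p q k \is monic.
Proof.
case: k => [|k]; first exact: monic1.
by rewrite /= monicMl ?monicX // monic_prod_XsubC.
Qed.

Lemma size_ffall k : size (ffall p q k) = k.+1.
Proof.
case: k => [|k]; first by rewrite /= size_poly1.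
rewrite /= mulrC size_mulX ?monic_neq0 ?monic_prod_XsubC //.
by rewrite size_prod_XsubC /index_iota subn1 size_iota.
Qed.

Lemma coef_ffall_diag k : (ffall p q k)`_k = 1.
Proof. by move/monicP: (monic_ffall k); rewrite /lead_coef size_ffall. Qed.

(* For k = 0 this uses the convention F_0 = 0. *)
Lemma mulX_ffall k :
  'X * ffall p q k = ffall p q k.+1 + (Fpq p q k)%:P * ffall p q k.
Proof.
case: k => [|k]; first by rewrite /= big_geq // mulr1 mul0r addr0.
have -> : ffall p q k.+2 = ffall p q k.+1 * ('X - (Fpq p q k.+1)%:P).
  by rewrite /ffall big_nat_recr //= mulrA.
ring.
Qed.

End FallingFactorial.

Arguments ffall : simpl never.

Section StirlingColumns.
Variables (R : comNzRingType) (p q : R) (Sf : nat -> nat -> R).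
Hypothesis expand_Xn :
  forall n : nat, 'X^n = \sum_(k < n.+1) (Sf n k)%:P * ffall p q k.

(* Sf n k is only determined for k <= n; [Sft] extends it by 0. *)
Definition Sft k n := if (k <= n)%N then Sf n k else 0.

Lemma Sft_gt k n : (n < k)%N -> Sft k n = 0.
Proof. by move=> ltnk; rewrite /Sft leqNgt ltnk. Qed.

Lemma expand_Xn_Sft n : 'X^n = \sum_(k < n.+1) (Sft k n)%:P * ffall p q k.
Proof. by rewrite expand_Xn; apply: eq_bigr => i _; rewrite /Sft -ltnS ltn_ord. Qed.

Lemma SftS n k :
  Sft k n.+1 = (if k is k'.+1 then Sft k' n else 0) + Fpq p q k * Sft k n.
Proof.
have [ltk|] := ltnP k n.+2; last first.
  move=> lek; rewrite !Sft_gt ?mulr0 ?addr0 //; last exact: leq_trans lek.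
  by case: k lek => // k lek; rewrite Sft_gt.
(* Both sides are the coordinates of 'X * 'X^n in the basis (ffall p q k)_k. *)
pose rhs k := (if k is k'.+1 then Sft k' n else 0) + Fpq p q k * Sft k n.
apply: (triangular_comb_inj (coef_ffall_diag p q)
          (fun k => eq_leq (size_ffall p q k)) (c := Sft^~ n.+1) (d := rhs) _ ltk).
rewrite -expand_Xn_Sft exprS expand_Xn_Sft mulr_sumr.
under [RHS]eq_bigr do rewrite polyCD mulrDl.
rewrite big_split [X in _ = X + _]big_ord_recl [X in _ = _ + X]big_ord_recr /=.
rewrite (@Sft_gt n.+1 n (ltnSn n)) mulr0 polyC0 !mul0r addr0 add0r -big_split.
apply: eq_bigr => i _ /=; rewrite mulrCA mulX_ffall mulrDr polyCM.
by rewrite add0n; congr (_ + _); rewrite mulrCA mulrA.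
Qed.

Lemma Sft0 n : Sft 0 n = (n == 0)%:R.
Proof.
elim: n => [|n IHn]; last by rewrite SftS IHn mul0r add0r.
move/(congr1 (fun P : {poly R} => P`_0)): (expand_Xn_Sft 0).
by rewrite big_ord1 /ffall /= mulr1 expr0 coef1 coefC.
Qed.

Definition Sft_trunc k N : {poly R} := \poly_(i < N) Sft k i.
Definition Fprod k : {poly R} := \prod_(1 <= i < k.+1) (1 - (Fpq p q i)%:P * 'X).

Lemma Sft_truncSS k N :
  Sft_trunc k.+1 N.+1 = 'X * (Sft_trunc k N + (Fpq p q k.+1)%:P * Sft_trunc k.+1 N).
Proof.
apply/polyP => [[|j]]; rewrite coefXM coef_poly /=; first by rewrite Sft_gt.
rewrite coefD coefCM !coef_poly ltnS SftS.
by case: ifP => //; rewrite mulr0 addr0.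
Qed.

Lemma Sft_truncS k N : Sft_trunc k N.+1 = Sft_trunc k N + (Sft k N)%:P * 'X^N.
Proof.
apply/polyP => j; rewrite coefD coefCM coefXn !coef_poly ltnS leq_eqVlt.
by case: eqP => [->|_]; rewrite ?ltnn ?add0r ?mulr1 ?mulr0 ?addr0.
Qed.

Lemma coef_Sft_trunc_Fprod k N n :
  (n < N)%N -> (Sft_trunc k N * Fprod k)`_n = (n == k)%:R.
Proof.
elim: k N n => [|k IHk] N n ltnN.
  by rewrite /Fprod big_geq // mulr1 coef_poly ltnN Sft0.
case: N ltnN => // N ltnN.
set c := Fpq p q k.+1.
have FprodS : Fprod k.+1 = Fprod k * (1 - c%:P * 'X) by rewrite /Fprod big_nat_recr.
have shift : Sft_trunc k.+1 N.+1 * (1 - c%:P * 'X) =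
             'X * Sft_trunc k N - (c * Sft k.+1 N)%:P * 'X^(N.+1).
  rewrite [LHS](_ : _ = Sft_trunc k.+1 N.+1 - c%:P * 'X * Sft_trunc k.+1 N.+1);
    last by ring.
  by rewrite {1}Sft_truncSS Sft_truncS polyCM exprS; ring.
rewrite FprodS mulrCA mulrC shift mulrBl coefB -!mulrA coefCM coefXnM ltnN.
by rewrite mulr0 subr0 coefXM; case: n ltnN => [|n] //= ltnN; rewrite IHk.
Qed.

End StirlingColumns.

Theorem theorem10 (R : comNzRingType) (p q : R) (Sf : nat -> nat -> R) :
  (forall n : nat, 'X^n = \sum_(k < n.+1) (Sf n k)%:P * ffall p q k) ->
  forall k : nat, (1 <= k)%N ->
    fps_mul (fun n => if (k <= n)%N then Sf n k else 0)
            (fps_of_poly (\prod_(1 <= i < k.+1) (1 - (Fpq p q i)%:P * 'X)))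
    = fps_tpow R k.
Proof.
move=> expand_Xn k _; apply: functional_extensionality => n.
rewrite /fps_tpow -(coef_Sft_trunc_Fprod expand_Xn k (ltnSn n)) coefM.
by apply: eq_bigr => i _; rewrite coef_poly ltn_ord.
Qed.
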